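(* Let $G$ and $H$ be graphs such that: (a) $G$ admits an automorphism $\eta$ with $\eta(v)\in N(v)$ for every $v\in V(G)$, and every orbit of $\eta$ has even length; (b) $H$ is bipartite and every vertex of $H$ has even degree. Then $\alpha_{\mathrm{od}}(\mu[G,H])\ge |H|\cdot\alpha_{\mathrm{od}}(G)$.
   Context: For graphs $G$ and $H$, $\mu[G,H]$ is the graph obtained by replacing each vertex $w\in V(H)$ with a copy $G_w$ of $G$ and, for every edge $w_1w_2\in E(H)$, adding the perfect matching between $G_{w_1}$ and $G_{w_2}$ that joins the two copies of each vertex of $G$ (i.e., $\mu[G,H]$ is the Cartesian product $G\,\Box\,H$). An odd independent set in a graph $F=(V,E)$ is an independent set $S$ such that every $v\in V\setminus S$ has either no neighbor or an odd number of neighbors in $S$; $\alpha_{\mathrm{od}}(F)$ is the maximum size of such a set. $|H|$ is the number of vertices of $H$; $N(v)$ is the open neighborhood. *)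

From mathcomp Require Import all_boot all_fingroup.
Set Implicit Arguments. Unset Strict Implicit. Unset Printing Implicit Defensive.

Definition simple_graph (T : finType) (e : rel T) : Prop :=
  symmetric e /\ irreflexive e.

Definition nbhd (T : finType) (e : rel T) (v : T) : {set T} := [set u | e v u].

Definition independent (T : finType) (e : rel T) (S : {set T}) : bool :=
  [forall x in S, forall y in S, ~~ e x y].

Definition odd_independent (T : finType) (e : rel T) (S : {set T}) : bool :=
  independent e S &&
  [forall v in ~: S, (#|nbhd e v :&: S| == 0) || odd #|nbhd e v :&: S|].

Definition alpha_od (T : finType) (e : rel T) : nat :=
  \max_(S : {set T} | odd_independent e S) #|S|.

(* mu[G,H] = Cartesian product G box H, vertices (g, h) *)
Definition cart_prod (T1 T2 : finType) (e1 : rel T1) (e2 : rel T2) : rel (T1 * T2) :=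
  fun x y => (e1 x.1 y.1 && (x.2 == y.2)) || ((x.1 == y.1) && e2 x.2 y.2).

Definition bipartite (T : finType) (e : rel T) : Prop :=
  exists c : T -> bool, forall x y, e x y -> c x != c y.

Definition graph_automorphism (T : finType) (e : rel T) (eta : {perm T}) : Prop :=
  forall x y, e (eta x) (eta y) = e x y.

From mathcomp Require Import all_boot all_fingroup.
Set Implicit Arguments. Unset Strict Implicit. Unset Printing Implicit Defensive.

(* Take a maximum odd independent set S of G and a proper 2-colouring c of H,
   and place S in the copies G_w with c w = false and eta(S) in those with
   c w = true.  Each layer is odd independent because eta is an automorphism.
   Since eta v ~ v, every vertex of S has a neighbour in eta(S) and vice versa;
   in particular S and eta(S) are disjoint, so the matching edges between
   layers (which join opposite colours) never join two chosen vertices.  A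
   vertex (g, w) outside the set sees 0 or an odd number of chosen vertices in
   its own layer, and across the matching either none or all deg(w) of its
   matching neighbours; the latter happens only when g lies in the other
   layer's set, and then its own-layer count is nonzero, hence odd.  As deg(w)
   is even, the total is 0 or odd. *)

Section OddIndependentSets.
Variables (T : finType) (e : rel T).

Lemma odd_independent_set0 : odd_independent e set0.
Proof.
apply/andP; split; apply/forallP=> x; rewrite ?inE //.
by rewrite setI0 cards0.
Qed.

Lemma leq_card_alpha_od S : odd_independent e S -> #|S| <= alpha_od e.
Proof. exact: leq_bigmax_cond. Qed.

Lemma alpha_odP : exists2 S, odd_independent e S & #|S| = alpha_od e.
Proof.
have nonempty : 0 < #|[pred S : {set T} | odd_independent e S]|.
  by apply/card_gt0P; exists set0; exact: odd_independent_set0.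
have [S S_odd S_max] := eq_bigmax_cond (fun S : {set T} => #|S|) nonempty.
by exists S; rewrite // S_max; apply: eq_bigl.
Qed.

Variable s : {perm T}.
Hypothesis s_aut : graph_automorphism e s.

Lemma nbhd_aut v : nbhd e (s v) = s @: nbhd e v.
Proof.
by apply/setP=> x; rewrite (can_imset_pre _ (permK s)) !inE -{1}(permKV s x) s_aut.
Qed.

Lemma odd_independent_aut S : odd_independent e S -> odd_independent e (s @: S).
Proof.
case/andP=> /forallP S_ind /forallP S_odd; apply/andP; split.
  apply/forallP=> sx; apply/implyP=> /imsetP[x Sx ->].
  apply/forallP=> sy; apply/implyP=> /imsetP[y Sy ->].
  by rewrite s_aut; have /implyP/(_ Sx)/forallP/(_ y)/implyP := S_ind x; apply.
apply/forallP=> v; rewrite -(permKV s v); set u := (s^-1 v)%g.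
rewrite inE mem_imset; last exact: perm_inj.
rewrite nbhd_aut -imsetI; last by move=> ? ? _ _; exact: perm_inj.
rewrite card_imset; last exact: perm_inj.
by have := S_odd u; rewrite inE.
Qed.

End OddIndependentSets.

Lemma card_fibred (T1 T2 : finType) (F : T2 -> {set T1}) :
  #|[set x : T1 * T2 | x.1 \in F x.2]| = \sum_h #|F h|.
Proof.
under eq_bigr => h _ do rewrite -sum1_card big_mkcond /=.
rewrite exchange_big pair_bigA -sum1_card big_mkcond /=.
by apply: eq_bigr => x _; rewrite inE.
Qed.

Section ColouredLift.
Variables (T1 T2 : finType) (e1 : rel T1) (e2 : rel T2).
Variables (c : T2 -> bool) (S : bool -> {set T1}).
Hypothesis c_proper : forall h h', e2 h h' -> c h != c h'.
Hypothesis e2_even : forall h, ~~ odd #|nbhd e2 h|.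
Hypothesis S_odd_independent : forall b, odd_independent e1 (S b).
Hypothesis S_dominated : forall b g, g \in S (~~ b) -> nbhd e1 g :&: S b != set0.

Definition coloured_lift : {set T1 * T2} := [set x | x.1 \in S (c x.2)].

Lemma c_edge h h' : e2 h h' -> c h' = ~~ c h.
Proof. by move/c_proper; case: (c h); case: (c h'). Qed.

Lemma S_independent b g g' : g \in S b -> g' \in S b -> ~~ e1 g g'.
Proof.
move=> Sg Sg'; case/andP: (S_odd_independent b) => /forallP/(_ g) + _.
by rewrite Sg => /forallP/(_ g'); rewrite Sg'.
Qed.

Lemma S_disjoint b g : g \in S (~~ b) -> g \notin S b.
Proof.
move=> /S_dominated/set0Pn[g' /setIP[]]; rewrite inE => gg' Sg'.
by apply/negP=> Sg; have := S_independent Sg Sg'; rewrite gg'.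
Qed.

Lemma card_nbhd_coloured_lift g h :
  #|nbhd (cart_prod e1 e2) (g, h) :&: coloured_lift| =
  #|nbhd e1 g :&: S (c h)| + (g \in S (~~ c h)) * #|nbhd e2 h|.
Proof.
set A1 := (fun g' => (g', h)) @: (nbhd e1 g :&: S (c h)).
set A2 := (fun h' => (g, h')) @: [set h' in nbhd e2 h | g \in S (~~ c h)].
have -> : nbhd (cart_prod e1 e2) (g, h) :&: coloured_lift = A1 :|: A2.
  apply/setP=> -[g' h']; rewrite !inE /cart_prod /=; apply/idP/idP.
    case/andP=> /orP[/andP[gg' /eqP <-] | /andP[/eqP <- hh']] Sg'.
      by apply/orP; left; apply/imsetP; exists g'; rewrite // !inE gg'.
    by apply/orP; right; apply/imsetP; exists h'; rewrite // !inE hh' -(c_edge hh').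
  case/orP=> /imsetP[y]; rewrite !inE => /andP[adj Sy] [-> ->] /=.
    by rewrite adj eqxx.
  by rewrite adj (c_edge adj) Sy eqxx orbT.
have A1A2_disjoint : A1 :&: A2 = set0.
  apply/setP=> x; rewrite !inE; apply/negP.
  case/andP=> /imsetP[y _ ->] /imsetP[h' Nh' [_ hh']].
  by move: Nh'; rewrite !inE -hh' => /andP[/c_edge]; case: (c h).
rewrite cardsU A1A2_disjoint cards0 subn0 !card_imset; try by move=> ? ? [].
congr (_ + _); case: (g \in S (~~ c h)); rewrite ?mul1n ?mul0n.
  by apply: eq_card => h'; rewrite !inE andbT.
by apply: eq_card0 => h'; rewrite !inE andbF.
Qed.

Lemma odd_independent_coloured_lift :
  odd_independent (cart_prod e1 e2) coloured_lift.
Proof.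
apply/andP; split.
  apply/forallP=> -[g h]; apply/implyP; rewrite inE /= => Sg.
  apply/forallP=> -[g' h']; apply/implyP; rewrite inE /= => Sg'.
  rewrite /cart_prod /=; apply/negP=> /orP[/andP[gg' /eqP eh] | /andP[/eqP eg hh']].
    by move: Sg'; rewrite -eh => /(S_independent Sg); rewrite gg'.
  by move: Sg'; rewrite -eg (c_edge hh') => /S_disjoint; rewrite Sg.
apply/forallP=> -[g h]; apply/implyP; rewrite !inE /= => notSg.
have fibre_odd : (#|nbhd e1 g :&: S (c h)| == 0) || odd #|nbhd e1 g :&: S (c h)|.
  by case/andP: (S_odd_independent (c h)) => _ /forallP/(_ g); rewrite inE notSg.
rewrite card_nbhd_coloured_lift.
case: (boolP (g \in S (~~ c h))) => [Sg | _]; last by rewrite addn0.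
move: fibre_odd; rewrite cards_eq0 (negPf (S_dominated Sg)) /= => fibre_odd.
by rewrite mul1n oddD fibre_odd (negPf (e2_even h)) orbT.
Qed.

Lemma card_coloured_lift k :
  (forall b, #|S b| = k) -> #|coloured_lift| = #|T2| * k.
Proof.
move=> S_card; rewrite (card_fibred (fun h => S (c h))).
by under eq_bigr => h _ do rewrite S_card; rewrite sum_nat_const.
Qed.

End ColouredLift.

Theorem theorem3 (T1 T2 : finType) (e1 : rel T1) (e2 : rel T2) :
  simple_graph e1 -> simple_graph e2 ->
  (exists eta : {perm T1},
      graph_automorphism e1 eta /\
      (forall v, eta v \in nbhd e1 v) /\
      (forall v, ~~ odd (fingraph.order eta v))) ->
  bipartite e2 ->
  (forall w, ~~ odd #|nbhd e2 w|) ->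
  #|T2| * alpha_od e1 <= alpha_od (cart_prod e1 e2).
Proof.
move=> [e1_sym _] _ [eta [eta_aut [eta_adj _]]] [c c_proper] e2_even.
have [S S_odd <-] := alpha_odP e1.
pose F b := if b then eta @: S else S.
have F_odd b : odd_independent e1 (F b).
  by case: b; rewrite /F //; exact: odd_independent_aut.
have F_card b : #|F b| = #|S|.
  by case: b; rewrite /F // card_imset //; exact: perm_inj.
have F_dom b g : g \in F (~~ b) -> nbhd e1 g :&: F b != set0.
  rewrite /F; case: b => /= [Sg | /imsetP[s Ss ->]]; apply/set0Pn.
    by exists (eta g); rewrite !inE imset_f ?andbT //; have := eta_adj g; rewrite inE.
  by exists s; rewrite !inE Ss andbT e1_sym; have := eta_adj s; rewrite inE.
rewrite -(card_coloured_lift c F_card); apply: leq_card_alpha_od.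
exact: odd_independent_coloured_lift.
Qed.
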